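(* Fix a binary instance $(\mu_0,\hat q)$. There is a constant $C<\infty$, depending only on $(\mu_0,\hat q)$, with the following property. For every horizon $T\ge 2$ and every bias $\alpha^\star\in(0,1]$, the Binary Search policy satisfies $\mathrm{Reg}_T(\mathrm{BS};\alpha^\star)\le C\log T$. More precisely, suppose $\alpha^\star\ge\alpha_{\min}$, and write $\nu^\star=\nu_B(\alpha^\star)$, $L_\nu=\frac{(1-\mu_0)^2}{\hat q-\mu_0}$ and $L_W=\frac{\mu_0(1-\mu_0)^2}{\hat q-\mu_0}$. Then $$\mathrm{Reg}_T\le \lceil 2\log_2T\rceil+\frac{L_\nu(1-\alpha_{\min})}{\nu^\star}+L_W(1-\alpha_{\min}).$$ If instead $\alpha^\star<\alpha_{\min}$, the regret is $0$.
   Context: Binary model: states $\Omega=\{0,1\}$, actions $A=\{0,1\}$, prior $\mu_0=\Pr(\omega=1)\in(0,1)$, cutoff $\hat q\in(\mu_0,1)$, sender utility $u_S(a,\omega)=\mathbf 1\{a=1\}$. A receiver with fixed bias $\alpha^\star\in(0,1]$, unknown to the sender, takes action $1$ after Bayesian posterior $\nu=\Pr(\omega=1\mid s)$ iff $(1-\alpha^\star)\mu_0+\alpha^\star\nu\ge\hat q$. Define $\nu_B(\alpha)=\mu_0+(\hat q-\mu_0)/\alpha$ and $\alpha_{\min}=(\hat q-\mu_0)/(1-\mu_0)$. For $\alpha\in[\alpha_{\min},1]$, let $\tau(\alpha)$ be the Bayes-plausible scheme with mass $1-\mu_0/\nu_B(\alpha)$ on posterior $0$ and mass $\mu_0/\nu_B(\alpha)$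 on posterior $\nu_B(\alpha)$. Repeated interaction over $T$ rounds. In each round $t$: - The sender commits to a Bayes-plausible posterior distribution (a mean-$\mu_0$ distribution on $[0,1]$). - The state $\omega_t\sim\mu_0$ is drawn and a posterior $\nu_t$ is realized from the committed distribution, consistently with $\omega_t$. - The receiver acts, and the sender observes $\nu_t$ and the action. Let $\mathrm{OPT}(\alpha^\star)$ be the supremum, over Bayes-plausible distributions, of the probability that the realized posterior induces action $1$. The regret is $\mathrm{Reg}_T=T\cdot\mathrm{OPT}(\alpha^\star)-\sum_{t=1}^T\mathbb E[\Pr(\text{action }1\text{ in round }t\mid\text{history})]$. Binary Search (BS) policy: initialize $[\underline\alpha,\overline\alpha]=[\alpha_{\min},1]$, $k=0$, and $M=\lceil 2\log_2T\rceil$. While $k<M$ and rounds remain, set $m$ to the midpoint of $[\underline\alpha,\overline\alpha]$ and play $\tau(m)$. Whenever the realized posterior is nonzero: - if the receiver chooses action $1$, set $\underline\alpha\gets m$; otherwise set $\overline\alpha\gets m$; - then increment $k$. Afterwards, play $\tau(\underline\alpha)$ in all remaining rounds. *)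

From HB Require Import structures.
From mathcomp Require Import all_boot all_order all_algebra.
From mathcomp Require Import all_classical all_reals all_analysis.
Set Implicit Arguments. Unset Strict Implicit. Unset Printing Implicit Defensive.
Import Order.TTheory GRing.Theory Num.Theory.
Local Open Scope ring_scope.
Local Open Scope classical_set_scope.

Section BinaryModel.
Context {R : realType}.
Variables (mu0 qhat : R).

Definition nuB (a : R) : R := mu0 + (qhat - mu0) / a.

Definition alpha_min : R := (qhat - mu0) / (1 - mu0).

Definition acts1 (a nu : R) : bool := qhat <= (1 - a) * mu0 + a * nu.

Definition bayes_plausible (P : probability R R) : Prop :=
  P `[0, 1] = 1%E /\ (\int[P]_x (x%:E) = mu0%:E)%E.

Definition OPT (a : R) : \bar R :=
  ereal_sup [set P [set nu | acts1 a nu] | P in bayes_plausible].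

(* tau(m): mass mu0/nuB(m) on posterior nuB(m), the rest on posterior 0 *)
Definition tau_mass (m : R) : R := mu0 / nuB m.

Definition round_prob (a m : R) : R :=
  tau_mass m * (acts1 a (nuB m))%:R + (1 - tau_mass m) * (acts1 a 0)%:R.

(* Expected sum, over the remaining n rounds, of Pr(action 1 | history)
   under the Binary Search policy with parameter M, current interval
   [lo, hi] and counter k.  With probability tau_mass m the realized
   posterior is nonzero; then (if k < M) the interval is updated according
   to the receiver's action and k is incremented. *)
Fixpoint bs_value (a : R) (M n : nat) (lo hi : R) (k : nat) : R :=
  match n with
  | 0 => 0
  | n'.+1 =>
    let m := if (k < M)%N then (lo + hi) / 2 else lo in
    let p := tau_mass m in
    let next :=
      if (k < M)%N then
        (if acts1 a (nuB m) then bs_value a M n' m hi k.+1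
         else bs_value a M n' lo m k.+1)
      else bs_value a M n' lo hi k in
    round_prob a m + p * next + (1 - p) * bs_value a M n' lo hi k
  end.

Definition BS_M (T : nat) : nat := absz (Num.ceil (2 * (ln (T%:R : R) / ln 2))).

Definition BS_reward (a : R) (T : nat) : R :=
  bs_value a (BS_M T) T alpha_min 1 0.

Definition regret (a : R) (T : nat) : \bar R :=
  ((T%:R : R)%:E * OPT a - (BS_reward a T)%:E)%E.

Definition L_nu : R := (1 - mu0) ^+ 2 / (qhat - mu0).
Definition L_W : R := mu0 * (1 - mu0) ^+ 2 / (qhat - mu0).

End BinaryModel.

(* A receiver of bias a >= alpha_min acts exactly on posteriors >= nu_B(a), so
   Markov's inequality for a mean-mu0 law on [0, 1] gives
   OPT(a) <= mu0 / nu_B(a) = tau_mass(a); below alpha_min, nu_B(a) > 1 and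
   neither OPT nor Binary Search ever triggers action 1.
   Above alpha_min, the loss of Binary Search against T tau_mass(a) is paid
   for by the potential (M - k) + L_nu / nu_B(a) * (hi - lo): a round at the
   midpoint m loses at most tau_mass(a) - tau_mass(m) <= tau_mass(m) L_nu /
   nu_B(a) (a - m) if m <= a and at most tau_mass(m) otherwise, while with
   probability tau_mass(m) it uses up one step of the counter and halves the
   interval.  After M halvings hi - lo <= (1 - alpha_min) 2^-M
   <= (1 - alpha_min) / T, and tau_mass is L_W-Lipschitz on [alpha_min, 1],
   so the exploitation phase costs at most L_W (1 - alpha_min) overall.
   Finally M <= 2 log2 T + 1 <= 3 log2 T. *)

From HB Require Import structures.
From mathcomp Require Import all_boot all_order all_algebra.
From mathcomp Require Import all_classical all_reals all_analysis.
From mathcomp Require Import measurable_realfun ring lra.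
Import Order.TTheory GRing.Theory Num.Theory.
Set Implicit Arguments.
Unset Strict Implicit.
Local Open Scope ring_scope.

Section bayes_plausible.
Context {R : realType}.
Variable mu0 : R.
Implicit Type P : probability R R.
Local Open Scope classical_set_scope.
Local Open Scope ereal_scope.

Lemma measurable_ge (c : R) : measurable [set x : R | (c <= x)%R].
Proof.
rewrite (_ : [set x | _] = `[c, +oo[%classic); first exact: measurable_itv.
by apply/seteqP; split => x /=; rewrite in_itv /= andbT.
Qed.

Lemma bayes_plausible_outside01 P : bayes_plausible mu0 P -> P (~` `[0%R, 1%R]) = 0.
Proof.
by case=> P01 _; rewrite probability_setC ?P01 ?subee //; exact: measurable_itv.
Qed.

Lemma bayes_plausible_integral_abs P : bayes_plausible mu0 P -> \int[P]_x (`|x|%R)%:E = mu0%:E.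
Proof.
move=> bp; case: (bp) => _ <-; apply: ae_eq_integral => //.
- by apply/measurable_EFinP; exact: normr_measurable.
- exists (~` `[0%R, 1%R]); split; first exact: measurableC (measurable_itv _).
    exact: bayes_plausible_outside01.
  move=> x /= x_bad; rewrite in_itv /= => /andP[x_ge0 _]; apply: x_bad => _.
  by rewrite ger0_norm.
Qed.

Lemma bayes_plausible_markov P (c : R) : (0 < c)%R -> bayes_plausible mu0 P ->
  c%:E * P [set x | (c <= x)%R] <= mu0%:E.
Proof.
move=> c_gt0 bp; rewrite -(bayes_plausible_integral_abs bp).
have mEFin : measurable_fun [set: R] (EFin : R -> \bar R) by exact/measurable_EFinP.
apply: le_trans (@le_integral_abse _ _ _ P _ measurableT _ _ mEFin c_gt0).
apply: lee_wpmul2l; first by rewrite lee_fin ltW.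
apply: le_measure; rewrite ?inE.
- exact: measurable_ge.
- apply: emeasurable_fun_c_infty => //; exact: measurableT_comp.
- by move=> x /= c_le_x; split => //; rewrite lee_fin (le_trans c_le_x) // ler_norm.
Qed.

Lemma bayes_plausible_ge_gt1 P (c : R) : (1 < c)%R -> bayes_plausible mu0 P ->
  P [set x | (c <= x)%R] = 0.
Proof.
move=> c_gt1 bp; apply/eqP; rewrite eq_le measure_ge0 andbT.
rewrite -(bayes_plausible_outside01 bp); apply: le_measure; rewrite ?inE.
- exact: measurable_ge.
- exact: measurableC (measurable_itv _).
- move=> x /= c_le_x; rewrite in_itv /= => /andP[_ x_le1].
  by move: (lt_le_trans c_gt1 (le_trans c_le_x x_le1)); rewrite ltxx.
Qed.

Lemma bayes_plausible_dirac : (0 <= mu0 <= 1)%R -> bayes_plausible mu0 \d_mu0.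
Proof.
move=> mu0_01.
have mass01 : @dirac _ R mu0 R `[0%R, 1%R] = 1 by rewrite diracE mem_set.
have mean : \int[@dirac _ R mu0 R]_x x%:E = mu0%:E.
  by rewrite integral_dirac // diracE mem_set // mul1e.
by split; [exact: mass01 | exact: mean].
Qed.

End bayes_plausible.

Section binary_search_budget.
Context {R : realType}.
Variable T : nat.
Hypothesis T_gt0 : (0 < T)%N.

Local Notation log2T := (ln (T%:R : R) / ln 2).

Lemma log2T_ge0 : 0 <= log2T.
Proof. by rewrite divr_ge0 // ln_ge0 // ler1n. Qed.

Lemma BS_M_ceil : 2 * log2T <= (BS_M (R:=R) T)%:R /\ (BS_M (R:=R) T)%:R < 2 * log2T + 1.
Proof.
have x_ge0 : 0 <= 2 * log2T by rewrite mulr_ge0 ?log2T_ge0.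
rewrite /BS_M natr_absz ger0_norm; last by rewrite ceil_ge0 (lt_le_trans (ltrN10 _)).
split; first exact: ceil_ge.
by have := ceilB1_lt (2 * log2T); rewrite intrB; lra.
Qed.

Lemma exp2_BS_M_ge : T%:R <= 2 ^+ BS_M (R:=R) T :> R.
Proof.
have ln2_gt0 : 0 < ln (2 : R) by rewrite ln_gt0 // ltr1n.
have lnT : ln (T%:R : R) = log2T * ln 2 by rewrite divfK // gt_eqF.
rewrite -ler_ln ?posrE ?ltr0n ?exprn_gt0 // lnXn // -[ln 2 *+ _]mulr_natr lnT.
rewrite mulrC ler_pM2l //.
by have [+ _] := BS_M_ceil; have := log2T_ge0; lra.
Qed.

End binary_search_budget.

Section binary_model.
Context {R : realType}.
Variables (mu0 qhat : R).
Hypotheses (mu0_gt0 : 0 < mu0) (mu0_lt_qhat : mu0 < qhat) (qhat_lt1 : qhat < 1).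

Local Notation amin := (alpha_min mu0 qhat).
Local Notation nu := (nuB mu0 qhat).
Local Notation tau := (tau_mass mu0 qhat).
Local Notation Lnu := (L_nu mu0 qhat).
Local Notation LW := (L_W mu0 qhat).
Local Open Scope classical_set_scope.

Lemma alpha_minE : amin * (1 - mu0) = qhat - mu0.
Proof. by rewrite /alpha_min divfK // subr_eq0 gt_eqF // (lt_trans mu0_lt_qhat). Qed.

Lemma alpha_min_gt0 : 0 < amin.
Proof. by rewrite /alpha_min divr_gt0 ?subr_gt0 // (lt_trans mu0_lt_qhat). Qed.

Lemma alpha_min_lt1 : amin < 1.
Proof.
by rewrite /alpha_min ltr_pdivrMr ?mul1r ?subr_gt0 ?ltrD2r // (lt_trans mu0_lt_qhat).
Qed.

Lemma L_nu_ge0 : 0 <= Lnu.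
Proof. by rewrite /L_nu divr_ge0 ?sqr_ge0 // subr_ge0 ltW. Qed.

Lemma L_W_ge0 : 0 <= LW.
Proof. by rewrite /L_W -mulrA mulr_ge0 ?L_nu_ge0 // ltW. Qed.

Lemma nuBE (a : R) : 0 < a -> nu a = (mu0 * a + (qhat - mu0)) / a.
Proof. by move=> a_gt0; rewrite /nuB; field; rewrite gt_eqF. Qed.

Lemma nuB_gt0 (a : R) : 0 < a -> 0 < nu a.
Proof. by move=> a_gt0; rewrite /nuB addr_gt0 // divr_gt0 // subr_gt0. Qed.

Lemma nuB_ge_qhat (a : R) : 0 < a -> a <= 1 -> qhat <= nu a.
Proof.
move=> a_gt0 a_le1; rewrite /nuB -lerBlDl ler_pdivlMr //.
by rewrite ler_piMr // subr_ge0 ltW.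
Qed.

Lemma nuB_gt1 (a : R) : 0 < a -> a < amin -> 1 < nu a.
Proof.
move=> a_gt0 a_lt; rewrite /nuB -ltrBlDl ltr_pdivlMr // -alpha_minE [_ * a]mulrC.
by rewrite ltr_pM2r // subr_gt0 (lt_trans mu0_lt_qhat).
Qed.

Lemma ler_nuB (a m : R) : 0 < a -> 0 < m -> (nu a <= nu m) = (m <= a).
Proof.
move=> a_gt0 m_gt0; rewrite /nuB lerD2l ler_pM2l ?subr_gt0 //.
by rewrite lef_pV2 ?posrE.
Qed.

Lemma acts1E (a x : R) : 0 < a -> acts1 mu0 qhat a x = (nu a <= x).
Proof.
move=> a_gt0; rewrite /acts1 /nuB; set t := (qhat - mu0) / a.
have t_a : t * a = qhat - mu0 by rewrite divfK // gt_eqF.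
by apply/idP/idP => h; nra.
Qed.

Local Notation nuB_num x := (mu0 * x + (qhat - mu0)).

Lemma nuB_num_gt0 (x : R) : 0 < x -> 0 < nuB_num x.
Proof. by move=> x_gt0; rewrite addr_gt0 ?mulr_gt0 // subr_gt0. Qed.

Lemma nuB_num_ge (x : R) : amin <= x -> qhat - mu0 <= (1 - mu0) * nuB_num x.
Proof.
move=> x_ge; have mu0_lt1 := lt_trans mu0_lt_qhat qhat_lt1.
have : qhat - mu0 <= x * (1 - mu0) by rewrite -alpha_minE ler_wpM2r // subr_ge0 ltW.
(* [nra] does not use section hypotheses, hence the explicit [have]. *)
by move=> h; have := mu0_gt0; nra.
Qed.

Lemma tau_massE (m : R) : 0 < m -> tau m = mu0 * m / nuB_num m.
Proof.
move=> m_gt0; have := nuB_num_gt0 m_gt0.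
by rewrite /tau_mass nuBE // => g_gt0; field; rewrite !gt_eqF.
Qed.

Lemma tau_mass_ge0 (m : R) : 0 < m -> 0 <= tau m.
Proof. by move=> m_gt0; rewrite tau_massE // divr_ge0 ?mulr_ge0 // ltW // nuB_num_gt0. Qed.

Lemma tau_mass_le1 (m : R) : 0 < m -> tau m <= 1.
Proof.
move=> m_gt0; rewrite tau_massE // ler_pdivrMr ?nuB_num_gt0 // mul1r.
by rewrite lerDl subr_ge0 ltW.
Qed.

Lemma tau_massB (m a : R) : 0 < m -> 0 < a ->
  tau a - tau m = mu0 * (a - m) * ((qhat - mu0) / (nuB_num a * nuB_num m)).
Proof.
move=> m_gt0 a_gt0; have := nuB_num_gt0 m_gt0; have := nuB_num_gt0 a_gt0.
by rewrite !tau_massE // => ga gm; field; rewrite !gt_eqF.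
Qed.

Lemma tau_mass_le (m a : R) : 0 < m -> m <= a -> tau m <= tau a.
Proof.
move=> m_gt0 m_le_a; have a_gt0 := lt_le_trans m_gt0 m_le_a.
have ga := nuB_num_gt0 a_gt0; have gm := nuB_num_gt0 m_gt0.
rewrite -subr_ge0 tau_massB //; apply: mulr_ge0.
  by apply: mulr_ge0; rewrite ?subr_ge0 // ltW.
by apply: divr_ge0; rewrite ?subr_ge0 ltW ?mulr_gt0.
Qed.

Lemma tau_massB_le (m a B : R) : 0 < m -> m <= a ->
  (qhat - mu0) ^+ 2 <= B * (nuB_num a * nuB_num m) ->
  tau a - tau m <= mu0 * (a - m) * (B / (qhat - mu0)).
Proof.
move=> m_gt0 m_le_a hB; have a_gt0 := lt_le_trans m_gt0 m_le_a.
have gap : 0 < qhat - mu0 by rewrite subr_gt0.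
have gam : 0 < nuB_num a * nuB_num m by rewrite mulr_gt0 ?nuB_num_gt0.
rewrite tau_massB //; apply: ler_wpM2l; first by rewrite mulr_ge0 ?subr_ge0 // ltW.
by rewrite ler_pdivrMr // mulrAC ler_pdivlMr // -expr2.
Qed.

Lemma tau_massB_le_L_W (m a : R) : amin <= m -> m <= a -> tau a - tau m <= LW * (a - m).
Proof.
move=> m_ge m_le_a; have m_gt0 := lt_le_trans alpha_min_gt0 m_ge.
have gap : 0 < qhat - mu0 by rewrite subr_gt0.
have -> : LW * (a - m) = mu0 * (a - m) * ((1 - mu0) ^+ 2 / (qhat - mu0)).
  by rewrite /L_W; field; rewrite gt_eqF.
apply: tau_massB_le => //.
rewrite expr2 mulrACA; apply: ler_pM; rewrite ?(ltW gap) ?nuB_num_ge ?(le_trans m_ge) //.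
Qed.

Lemma tau_massB_le_L_nu (m a : R) : amin <= m -> m <= a ->
  tau a - tau m <= tau m * (Lnu / nu a) * (a - m).
Proof.
move=> m_ge m_le_a; have a_ge := le_trans m_ge m_le_a.
have m_gt0 := lt_le_trans alpha_min_gt0 m_ge; have a_gt0 := lt_le_trans alpha_min_gt0 a_ge.
have gap : 0 < qhat - mu0 by rewrite subr_gt0.
have ga := nuB_num_gt0 a_gt0; have gm := nuB_num_gt0 m_gt0.
set B := (a * (1 - mu0)) * (m * (1 - mu0)) / (nuB_num a * nuB_num m).
have -> : tau m * (Lnu / nu a) * (a - m) = mu0 * (a - m) * (B / (qhat - mu0)).
  by rewrite tau_massE // nuBE // /L_nu /B; field; rewrite !gt_eqF.
have mu0_le1 : 0 <= 1 - mu0 by rewrite subr_ge0 ltW // (lt_trans mu0_lt_qhat).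
apply: tau_massB_le => //; rewrite /B divfK ?mulf_neq0 ?gt_eqF // expr2.
by apply: ler_pM; rewrite ?(ltW gap) // -alpha_minE ler_wpM2r.
Qed.

Lemma acts1_nuB (a m : R) : 0 < a -> 0 < m -> acts1 mu0 qhat a (nu m) = (m <= a).
Proof. by move=> a_gt0 m_gt0; rewrite acts1E // ler_nuB. Qed.

Lemma acts1_0 (a : R) : 0 < a -> acts1 mu0 qhat a 0 = false.
Proof. by move=> a_gt0; rewrite acts1E // leNgt nuB_gt0. Qed.

Lemma round_probE (a m : R) : 0 < a -> 0 < m ->
  round_prob mu0 qhat a m = if m <= a then tau m else 0.
Proof.
move=> a_gt0 m_gt0; rewrite /round_prob acts1_nuB // acts1_0 // mulr0 addr0.
by case: ifP; rewrite ?mulr1 ?mulr0.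
Qed.

Lemma tau_mass_round_loss (a m hi : R) : amin <= m -> amin <= a -> a <= hi -> m <= hi ->
  tau a - (if m <= a then tau m else 0) <= tau m * (1 + Lnu / nu a * (hi - m)).
Proof.
move=> m_ge a_ge a_le_hi m_le_hi.
have m_gt0 := lt_le_trans alpha_min_gt0 m_ge; have a_gt0 := lt_le_trans alpha_min_gt0 a_ge.
have tau_m_ge0 := tau_mass_ge0 m_gt0.
have K_ge0 : 0 <= Lnu / nu a by rewrite divr_ge0 ?L_nu_ge0 // ltW ?nuB_gt0.
have slack : 0 <= tau m * (Lnu / nu a) * (hi - m).
  by apply: mulr_ge0; [exact: mulr_ge0 | rewrite subr_ge0].
rewrite mulrDr mulr1 mulrA; case: (leP m a) => [m_le_a | a_lt_m].
- have := tau_massB_le_L_nu m_ge m_le_a.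
  have : tau m * (Lnu / nu a) * (a - m) <= tau m * (Lnu / nu a) * (hi - m).
    by apply: ler_wpM2l; [exact: mulr_ge0 | rewrite lerD2r].
  by lra.
- by have := tau_mass_le a_gt0 (ltW a_lt_m); lra.
Qed.

Local Notation bs := (bs_value mu0 qhat).

Lemma bs_value_explore (a lo hi : R) M n k : 0 < a -> 0 < lo + hi -> (k < M)%N ->
  let m := (lo + hi) / 2 in
  bs a M n.+1 lo hi k
  = (if m <= a then tau m else 0)
    + tau m * (if m <= a then bs a M n m hi k.+1 else bs a M n lo m k.+1)
    + (1 - tau m) * bs a M n lo hi k.
Proof.
move=> a_gt0 lohi_gt0 k_lt_M m; have m_gt0 : 0 < m by rewrite divr_gt0.
by rewrite /= k_lt_M -/m round_probE // acts1_nuB.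
Qed.

Lemma bs_value_exploit (a lo hi : R) M n k : 0 < a -> 0 < lo -> (M <= k)%N ->
  bs a M n.+1 lo hi k = (if lo <= a then tau lo else 0) + bs a M n lo hi k.
Proof.
move=> a_gt0 lo_gt0 M_le_k; rewrite /= ltnNge M_le_k /= round_probE //.
by rewrite -addrA -mulrDl subrKC mul1r.
Qed.

Lemma bs_value_exploitE (a lo hi : R) M n k : 0 < lo -> lo <= a -> (M <= k)%N ->
  bs a M n lo hi k = n%:R * tau lo.
Proof.
move=> lo_gt0 lo_le_a M_le_k; elim: n => [|n IH]; first by rewrite mul0r.
by rewrite bs_value_exploit ?(lt_le_trans lo_gt0) // lo_le_a IH -natr1; ring.
Qed.

Lemma bs_value_exploit_regret (a lo hi : R) M n k :
  amin <= lo -> lo <= a -> a <= hi -> (M <= k)%N ->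
  n%:R * tau a - bs a M n lo hi k <= n%:R * (LW * (hi - lo)).
Proof.
move=> lo_ge lo_le_a a_le_hi M_le_k.
rewrite bs_value_exploitE ?(lt_le_trans alpha_min_gt0) // -mulrBr.
apply: ler_wpM2l => //; apply: le_trans (tau_massB_le_L_W lo_ge lo_le_a) _.
by apply: ler_wpM2l; [exact: L_W_ge0 | rewrite lerD2r].
Qed.

Lemma bs_value_eq0 (a lo hi : R) M n k : 0 < a -> a < amin -> amin <= lo -> lo <= hi ->
  bs a M n lo hi k = 0.
Proof.
move=> a_gt0 a_lt.
elim: n lo hi k => // n IH lo hi k lo_ge lo_le_hi.
have lo_gt0 := lt_le_trans alpha_min_gt0 lo_ge.
have a_lt_lo := lt_le_trans a_lt lo_ge.
have [k_lt_M | M_le_k] := ltnP k M; last first.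
  by rewrite bs_value_exploit // leNgt a_lt_lo IH // add0r.
rewrite bs_value_explore // ?(lt_le_trans lo_gt0) ?lerDl ?(le_trans (ltW lo_gt0)) //.
set m := (lo + hi) / 2; have [lo_le_m m_le_hi] : lo <= m /\ m <= hi by split; rewrite /m; lra.
by rewrite leNgt (lt_le_trans a_lt_lo lo_le_m) !IH ?(le_trans lo_ge) // !mulr0 !addr0.
Qed.

Lemma bs_value_regret (a lo hi : R) M n k :
  amin <= lo -> lo <= a -> a <= hi -> (k <= M)%N -> hi - lo <= (1 - amin) / 2 ^+ k ->
  n%:R * tau a - bs a M n lo hi k
  <= (M - k)%:R + Lnu / nu a * (hi - lo) + n%:R * (LW * (1 - amin) / 2 ^+ M).
Proof.
move=> lo_ge lo_le_a; have a_gt0 := lt_le_trans alpha_min_gt0 (le_trans lo_ge lo_le_a).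
set K := Lnu / nu a; set E := LW * (1 - amin) / 2 ^+ M.
have K_ge0 : 0 <= K by rewrite divr_ge0 ?L_nu_ge0 // ltW ?nuB_gt0.
have E_ge0 : 0 <= E.
  by rewrite divr_ge0 ?exprn_ge0 // mulr_ge0 ?L_W_ge0 // subr_ge0 ltW ?alpha_min_lt1.
elim: n lo hi k lo_ge lo_le_a => [|n IH] lo hi k lo_ge lo_le_a a_le_hi k_le_M width.
  by rewrite !mul0r /= subrr addr0 addr_ge0 // mulr_ge0 // subr_ge0 (le_trans lo_le_a).
have [k_lt_M | M_le_k] := ltnP k M; last first.
  have k_eq_M : k = M by apply/eqP; rewrite eqn_leq k_le_M.
  subst k; have LW_width : LW * (hi - lo) <= E.
    by rewrite /E -mulrA; apply: ler_wpM2l; [exact: L_W_ge0 | exact: width].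
  apply: le_trans (bs_value_exploit_regret n.+1 lo_ge lo_le_a a_le_hi (leqnn M)) _.
  have : n.+1%:R * (LW * (hi - lo)) <= n.+1%:R * E by apply: ler_wpM2l.
  have : 0 <= K * (hi - lo) by rewrite mulr_ge0 // subr_ge0 (le_trans lo_le_a).
  by rewrite subnn; lra.
have lo_gt0 := lt_le_trans alpha_min_gt0 lo_ge; have lo_le_hi := le_trans lo_le_a a_le_hi.
rewrite bs_value_explore // ?(lt_le_trans lo_gt0) ?lerDl ?(le_trans (ltW lo_gt0)) //.
set m := (lo + hi) / 2; set p := tau m.
have [hi_sub_m m_sub_lo] : hi - m = (hi - lo) / 2 /\ m - lo = (hi - lo) / 2.
  by split; rewrite /m; field.
have m_ge : amin <= m by rewrite (le_trans lo_ge) // -subr_ge0 m_sub_lo divr_ge0 ?subr_ge0.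
have m_le_hi : m <= hi by rewrite -subr_ge0 hi_sub_m divr_ge0 ?subr_ge0.
have half_width : (hi - lo) / 2 <= (1 - amin) / 2 ^+ k.+1.
  by rewrite exprSr invfM mulrA ler_pM2r ?invr_gt0.
set V' := if m <= a then bs a M n m hi k.+1 else bs a M n lo m k.+1.
have IH' : n%:R * tau a - V' <= (M - k.+1)%:R + K * ((hi - lo) / 2) + n%:R * E.
  rewrite /V'; case: (leP m a) => [m_le_a | a_lt_m].
  - by rewrite -hi_sub_m; apply: IH; rewrite ?hi_sub_m.
  - by rewrite -m_sub_lo; apply: IH; rewrite ?m_sub_lo // ltW.
have IH0 := IH lo hi k lo_ge lo_le_a a_le_hi (ltnW k_lt_M) width.
have loss := tau_mass_round_loss m_ge (le_trans lo_ge lo_le_a) a_le_hi m_le_hi.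
have p_ge0 : 0 <= p by rewrite tau_mass_ge0 // (lt_le_trans alpha_min_gt0).
have p_le1 : p <= 1 by rewrite tau_mass_le1 // (lt_le_trans alpha_min_gt0).
have q_ge0 : 0 <= 1 - p by rewrite subr_ge0.
have := ler_wpM2l p_ge0 IH'; have := ler_wpM2l q_ge0 IH0.
have -> : (M - k)%:R = (M - k.+1)%:R + 1 :> R by rewrite natr1 subnSK.
rewrite hi_sub_m -/p -/K in loss; rewrite -[n.+1%:R]natr1; lra.
Qed.

Lemma acts1_setE (a : R) : 0 < a -> [set x | acts1 mu0 qhat a x] = [set x | nu a <= x].
Proof. by move=> a_gt0; apply/seteqP; split => x /=; rewrite acts1E. Qed.

Lemma OPT_le_tau_mass (a : R) : 0 < a -> (OPT mu0 qhat a <= (tau a)%:E)%E.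
Proof.
move=> a_gt0; apply: ge_ereal_sup => _ [P bp <-].
rewrite acts1_setE // /tau_mass mulrC EFinM lee_pdivlMl ?nuB_gt0 //.
exact: bayes_plausible_markov (nuB_gt0 a_gt0) bp.
Qed.

Lemma OPT_eq0 (a : R) : 0 < a -> a < amin -> OPT mu0 qhat a = 0%E.
Proof.
move=> a_gt0 a_lt; have nu_gt1 := nuB_gt1 a_gt0 a_lt.
have mu0_01 : 0 <= mu0 <= 1 by rewrite !ltW // (lt_trans mu0_lt_qhat).
apply/eqP; rewrite eq_le; apply/andP; split.
  apply: ge_ereal_sup => _ [P bp <-].
  by rewrite acts1_setE // (bayes_plausible_ge_gt1 nu_gt1 bp).
apply: ereal_sup_ubound; exists (\d_mu0 : probability R R).
  exact: bayes_plausible_dirac.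
by rewrite acts1_setE // (bayes_plausible_ge_gt1 nu_gt1 (bayes_plausible_dirac mu0_01)).
Qed.

Lemma regret_le_BS_M (T : nat) (a : R) : (0 < T)%N -> amin <= a -> a <= 1 ->
  (regret mu0 qhat a T
   <= ((BS_M (R:=R) T)%:R + Lnu * (1 - amin) / nu a + LW * (1 - amin))%:E)%E.
Proof.
move=> T_gt0 a_ge a_le1; have a_gt0 := lt_le_trans alpha_min_gt0 a_ge.
have OPT_T : ((T%:R)%:E * OPT mu0 qhat a <= (T%:R)%:E * (tau a)%:E)%E.
  by apply: lee_wpmul2l; [rewrite lee_fin | exact: OPT_le_tau_mass].
rewrite /regret /BS_reward; apply: le_trans (leeB OPT_T (lexx _)) _.
rewrite -EFinM -EFinB lee_fin.
have := bs_value_regret T (lexx amin) a_ge a_le1 (leq0n (BS_M (R:=R) T)).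
rewrite expr0 divr1 subn0 mulrAC => /(_ (lexx _)).
have T_le := exp2_BS_M_ge (R:=R) T_gt0.
set M := BS_M T; set c := LW * (1 - amin).
have c_ge0 : 0 <= c by rewrite mulr_ge0 ?L_W_ge0 // subr_ge0 ltW ?alpha_min_lt1.
have : T%:R * (c / 2 ^+ M) <= c.
  by rewrite mulrCA ler_piMr // ler_pdivrMr ?exprn_gt0 // mul1r.
(* Without [clearbody], [lra] unfolds [M := BS_M T] and runs out of memory. *)
by clearbody M; lra.
Qed.

Lemma regret_eq0 (T : nat) (a : R) : 0 < a -> a < amin -> regret mu0 qhat a T = 0%E.
Proof.
move=> a_gt0 a_lt; rewrite /regret OPT_eq0 // mule0 /BS_reward.
by rewrite bs_value_eq0 ?sube0 // ltW ?alpha_min_lt1.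
Qed.

Lemma regret_le_ln (T : nat) (a : R) : (2 <= T)%N -> 0 < a <= 1 ->
  (regret mu0 qhat a T
   <= ((3 + (Lnu * (1 - amin) / qhat + LW * (1 - amin))) / ln 2 * ln (T%:R : R))%:E)%E.
Proof.
move=> T_ge2 /andP[a_gt0 a_le1]; have T_gt0 : (0 < T)%N by exact: ltnW.
have ln2_gt0 : 0 < ln (2 : R) by rewrite ln_gt0 // ltr1n.
rewrite mulrAC -mulrA; set r := ln T%:R / ln 2.
have r_ge1 : 1 <= r by rewrite ler_pdivlMr // mul1r ler_ln ?posrE ?ltr0n // ler_nat.
have qhat_gt0 : 0 < qhat by exact: lt_trans mu0_gt0 mu0_lt_qhat.
have amin_le1 : 0 <= 1 - amin by rewrite subr_ge0 ltW ?alpha_min_lt1.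
set c := Lnu * (1 - amin) / qhat + LW * (1 - amin).
have c_ge0 : 0 <= c.
  by rewrite addr_ge0 ?divr_ge0 ?(ltW qhat_gt0) // mulr_ge0 ?L_nu_ge0 ?L_W_ge0.
have [a_lt | a_ge] := ltP a amin.
  rewrite regret_eq0 // lee_fin; apply: mulr_ge0; last exact: le_trans ler01 r_ge1.
  exact: addr_ge0.
apply: le_trans (regret_le_BS_M T_gt0 a_ge a_le1) _; rewrite lee_fin.
have [_ /ltW BS_M_le] := BS_M_ceil (R:=R) T_gt0; rewrite -/r in BS_M_le.
have nu_term : Lnu * (1 - amin) / nu a <= Lnu * (1 - amin) / qhat.
  apply: ler_wpM2l; first by rewrite mulr_ge0 ?L_nu_ge0.
  by rewrite lef_pV2 ?posrE ?nuB_ge_qhat ?nuB_gt0.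
have := ler_peMr c_ge0 r_ge1; rewrite /c in c_ge0 *.
by set M := BS_M T in BS_M_le *; clearbody M r; lra.
Qed.

End binary_model.

Theorem proposition3p1 (R : realType) (mu0 qhat : R) :
  0 < mu0 -> mu0 < qhat -> qhat < 1 ->
  (exists C : R, forall (T : nat) (astar : R), (2 <= T)%N -> 0 < astar <= 1 ->
      (regret mu0 qhat astar T <= (C * ln (T%:R : R))%:E)%E)
  /\
  (forall (T : nat) (astar : R), (2 <= T)%N ->
      alpha_min mu0 qhat <= astar <= 1 ->
      (regret mu0 qhat astar T <=
        ((BS_M (R:=R) T)%:R
         + L_nu mu0 qhat * (1 - alpha_min mu0 qhat) / nuB mu0 qhat astar
         + L_W mu0 qhat * (1 - alpha_min mu0 qhat))%:E)%E)
  /\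
  (forall (T : nat) (astar : R), (2 <= T)%N ->
      0 < astar -> astar < alpha_min mu0 qhat ->
      regret mu0 qhat astar T = 0%E).
Proof.
move=> mu0_gt0 mu0_lt_qhat qhat_lt1; split; [|split].
- by eexists => T a T_ge2 a_01; exact: regret_le_ln.
- by move=> T a T_ge2 /andP[a_ge a_le1]; exact: regret_le_BS_M (ltnW T_ge2) a_ge a_le1.
- by move=> T a _ a_gt0 a_lt; exact: regret_eq0.
Qed.
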